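(* Let $Q$ be a connected quiver with two mutable vertices $1,2$ and one frozen vertex $u$, with $|b_{12}|\ge2$. Then for any infinite reduced mutation sequence $\mathbf M$, there are at most four values $\ell\ge0$ such that $Q^{(\ell)}_{\mathbf M}$ is acyclic.
   Context: A quiver is a finite directed multigraph with no loops and no oriented 2-cycles, whose vertex set is partitioned into mutable and frozen vertices. $b_{ik}$ = number of arrows $i\to k$ minus number of arrows $k\to i$. Mutation $\mu_j$ at mutable $j$: for each path $i\to j\to k$ add $b_{ij}b_{jk}$ arrows $i\to k$, reverse all arrows at $j$, cancel 2-cycles. A mutation sequence $\mathbf M=m_1m_2\cdots$ has $Q^{(0)}_{\mathbf M}=Q$, $Q^{(i)}_{\mathbf M}=\mu_{m_i}(Q^{(i-1)}_{\mathbf M})$; reduced means $m_i\ne m_{i+1}$ (so in rank 2 it alternates between $1$ and $2$). Connected: the mutable part is connected as an undirected graph and every frozen vertex is adjacent to some mutable vertex. Acyclic means the underlying directed graph has no directed cycle. *)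

From mathcomp Require Import all_boot all_order all_algebra.
Set Implicit Arguments. Unset Strict Implicit. Unset Printing Implicit Defensive.
Import Order.TTheory GRing.Theory Num.Theory.
Local Open Scope ring_scope.

(* A quiver on the vertex set 'I_n (no loops, no oriented 2-cycles) is
   encoded by its exchange matrix b : b i k = #(i -> k) - #(k -> i).
   Such matrices are exactly the skew-symmetric integer matrices. *)
Definition quiver_mx (n : nat) (B : 'M[int]_n) : Prop := forall i k, B k i = - B i k.

Definition pospart (x : int) : int := Num.max x 0.

(* Quiver mutation at j: for i,k <> j, add (#paths i->j->k) arrows i->k,
   which after cancelling 2-cycles changes b_ik by
   [b_ij]_+ [b_jk]_+ - [b_kj]_+ [b_ji]_+ ; arrows at j are reversed. *)
Definition mutate (n : nat) (j : 'I_n) (B : 'M[int]_n) : 'M[int]_n :=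
  \matrix_(i, k)
    if (i == j) || (k == j) then - B i k
    else B i k + pospart (B i j) * pospart (B j k)
               - pospart (B k j) * pospart (B j i).

(* Q^{(l)}_M : M l is the (l+1)-st mutation m_{l+1} *)
Fixpoint mut_seq (n : nat) (B : 'M[int]_n) (M : nat -> 'I_n) (l : nat) : 'M[int]_n :=
  match l with
  | 0 => B
  | l'.+1 => mutate (M l') (mut_seq B M l')
  end.

Definition arrow (n : nat) (B : 'M[int]_n) : rel 'I_n := fun i k => 0 < B i k.

Definition acyclic (n : nat) (B : 'M[int]_n) : bool :=
  [forall i, ~~ [exists k, arrow B i k && connect (arrow B) k i]].

(* Rank-2 quiver with one frozen vertex: vertices 'I_3; vertices 0,1 are the
   mutable vertices "1","2"; vertex 2 is the frozen vertex u. *)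
Definition v1 : 'I_3 := inord 0.
Definition v2 : 'I_3 := inord 1.
Definition vu : 'I_3 := inord 2.

Definition connected3 (B : 'M[int]_3) : Prop :=
  B v1 v2 != 0 /\ (B vu v1 != 0 \/ B vu v2 != 0).

Definition reduced_inf_seq (M : nat -> 'I_3) : Prop :=
  (forall l, M l \in [:: v1; v2]) /\ (forall l, M l != M l.+1).

(* Let b = b_{M0,M1}. Because the mutations alternate between the two mutable
   vertices, b_{M l, M (l+1)} = b in every Q_l, so only the two arrows at the
   frozen vertex u vary. Let W l be the weight of the arrow M (l+1) -> u in
   Q_l, signed by sgn b; then W (l+1) is the signed weight of u -> M l, so
   W l > 0 and W (l+1) > 0 give the oriented 3-cycle M l -> M (l+1) -> u -> M l
   (reversed when b < 0). Mutation yields the tropical recurrence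
   W (l+2) = |b| [W (l+1)]_+ - W l. As |b| >= 2, a positive pair
   (W l, W (l+1)) stays positive forever forward if W l <= W (l+1) and forever
   backward otherwise, and any nonzero pair reaches a positive one within four
   steps. So all acyclic indices lie in a window of four consecutive ones. *)
From mathcomp Require Import all_boot all_order all_algebra zify.
Set Implicit Arguments. Unset Strict Implicit. Unset Printing Implicit Defensive.
Import Order.TTheory GRing.Theory Num.Theory.
Local Open Scope ring_scope.

Section TropicalRecurrence.

Variable W : nat -> int.
Hypothesis W_grow : forall n, 0 < W n.+1 -> 2 * W n.+1 - W n <= W n.+2.
Hypothesis W_flip : forall n, W n.+1 <= 0 -> W n.+2 = - W n.

Definition both_pos n := (0 < W n) && (0 < W n.+1).

Lemma both_pos_incr_forward p d : both_pos p -> W p <= W p.+1 ->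
  both_pos (p + d) /\ W (p + d) <= W (p + d).+1.
Proof.
elim: d => [|d IH] Pp le_p; first by rewrite addn0.
have [/andP[W1 W2] le_d] := IH Pp le_p.
have := W_grow W2; rewrite /both_pos addnS.
split; first (apply/andP; split); lia.
Qed.

Lemma both_pos_decr_backward p d : both_pos (p + d) -> W (p + d).+1 <= W (p + d) ->
  both_pos p /\ W p.+1 <= W p.
Proof.
elim: d p => [|d IH] p; first by rewrite addn0.
rewrite -addSnnS => /IH H /H[/andP[W1 W2] le_d].
have := W_grow W1; rewrite /both_pos.
split; first (apply/andP; split); lia.
Qed.

Lemma both_pos_extend p : both_pos p ->
  (forall q, (p <= q)%N -> both_pos q) \/ (forall q, (q <= p)%N -> both_pos q).
Proof.
move=> Pp; case: (lerP (W p) (W p.+1)) => [le_p|/ltW lt_p]; [left|right] => q le_q.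
  by have [] := both_pos_incr_forward (q - p) Pp le_p; rewrite subnKC.
by rewrite -(subnKC le_q) in Pp lt_p; have [] := both_pos_decr_backward Pp lt_p.
Qed.

Hypothesis W_nz0 : W 0 != 0 \/ W 1 != 0.

Lemma W_nz n : W n != 0 \/ W n.+1 != 0.
Proof.
elim: n => [//|n IH].
by case: (lerP (W n.+1) 0) => [/W_flip|]; lia.
Qed.

Lemma both_pos_within4 n : exists2 j, (j <= 4)%N & both_pos (n + j).
Proof.
have cases k : (0 < W k.+1 /\ 2 * W k.+1 - W k <= W k.+2)
            \/ (W k.+1 <= 0 /\ W k.+2 = - W k).
  by case: (lerP (W k.+1) 0) => [/[dup]/W_flip|/[dup]/W_grow]; auto.
have : has (fun j => both_pos (n + j)) (iota 0 5).
  rewrite /= !addnS addn0 /both_pos; have := W_nz n.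
  by case: (cases n) => -[? ?]; case: (cases n.+1) => -[? ?];
     case: (cases n.+2) => -[? ?]; case: (cases n.+3) => -[? ?]; lia.
by case/hasP=> j; rewrite mem_iota; exists j.
Qed.

Lemma not_both_pos_near i l : ~~ both_pos i -> ~~ both_pos l -> (i <= l)%N ->
  (l < i + 4)%N.
Proof.
move=> nPi nPl le_il; rewrite ltnNge; apply/negP => le_l.
have [j le_j Pij] := both_pos_within4 i.
case: (both_pos_extend Pij) => [fwd|bwd].
  by rewrite fwd ?(leq_trans _ le_l) ?leq_add2l in nPl.
by rewrite bwd ?leq_addr in nPi.
Qed.

Lemma not_both_pos_size s : uniq s -> {in s, forall l, ~~ both_pos l} ->
  (size s <= 4)%N.
Proof.
case: s => [//|x s] uniq_s nP.
have [i i_s i_min] := ex_minnP (ex_intro (fun n => n \in x :: s) x (mem_head x s)).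
rewrite -(size_iota i 4) uniq_leq_size // => l l_s.
have le_il := i_min l l_s.
by rewrite mem_iota le_il not_both_pos_near ?nP.
Qed.

End TropicalRecurrence.

Lemma mutate_quiver_mx n (j : 'I_n) (B : 'M[int]_n) :
  quiver_mx B -> quiver_mx (mutate j B).
Proof.
move=> skB i k; rewrite !mxE orbC.
by case: ifP => _; rewrite skB ?opprK // (skB j i) (skB k j) /pospart; lia.
Qed.

Lemma mut_seq_quiver_mx n (B : 'M[int]_n) M l :
  quiver_mx B -> quiver_mx (mut_seq B M l).
Proof. by move=> skB; elim: l => [|l IH] //=; apply: mutate_quiver_mx. Qed.

Lemma arrow_cycle3_not_acyclic n (B : 'M[int]_n) i j k :
  arrow B i j -> arrow B j k -> arrow B k i -> ~~ acyclic B.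
Proof.
move=> ij jk ki; rewrite negb_forall; apply/existsP; exists i.
rewrite negbK; apply/existsP; exists j; rewrite ij.
exact: connect_trans (connect1 jk) (connect1 ki).
Qed.

Lemma vu_neq_v1 : vu != v1. Proof. by rewrite -val_eqE /= !inordK. Qed.
Lemma vu_neq_v2 : vu != v2. Proof. by rewrite -val_eqE /= !inordK. Qed.

Section RankTwoMutation.

Variables (B : 'M[int]_3) (M : nat -> 'I_3).
Hypotheses (B_quiver : quiver_mx B) (M_reduced : reduced_inf_seq M).

Local Notation Q := (mut_seq B M).

Lemma mutable_reduced l : M l = v1 \/ M l = v2.
Proof. by have := M_reduced.1 l; rewrite !inE => /orP[]/eqP; auto. Qed.

Lemma reduced_period2 l : M l.+2 = M l.
Proof.
have := M_reduced.2 l; have := M_reduced.2 l.+1.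
case: (mutable_reduced l) => ->; case: (mutable_reduced l.+1) => ->;
  by case: (mutable_reduced l.+2) => ->; rewrite ?eqxx.
Qed.

Lemma frozen_neq_reduced l : vu != M l.
Proof. by case: (mutable_reduced l) => ->; [exact: vu_neq_v1|exact: vu_neq_v2]. Qed.

Definition exch : int := B (M 0) (M 1).

Lemma exch_mut_seq l : Q l (M l) (M l.+1) = exch.
Proof.
elim: l => [//|l IH] /=; rewrite reduced_period2 mxE eqxx orbT /= -IH.
by rewrite (mut_seq_quiver_mx M l B_quiver) opprK.
Qed.

Lemma norm_exch : `|exch| = `|B v1 v2|.
Proof.
rewrite /exch; have := M_reduced.2 0%N.
by case: (mutable_reduced 0) => ->; case: (mutable_reduced 1) => ->;
  rewrite ?eqxx // B_quiver normrN.
Qed.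

Definition orient : int := if 0 < exch then 1 else -1.

Definition frozen_weight l : int := orient * Q l (M l.+1) vu.

Lemma frozen_weightS l : frozen_weight l.+1 = orient * Q l vu (M l).
Proof.
rewrite /frozen_weight /= reduced_period2 mxE eqxx /=.
by rewrite (mut_seq_quiver_mx M l B_quiver) opprK.
Qed.

Lemma frozen_weight_rec l :
  frozen_weight l.+2 = `|exch| * pospart (frozen_weight l.+1) - frozen_weight l.
Proof.
have skQ := mut_seq_quiver_mx M l B_quiver.
rewrite frozen_weightS /= mxE (negbTE (frozen_neq_reduced l)).
rewrite eq_sym (negbTE (M_reduced.2 l)) /= frozen_weightS /frozen_weight.
rewrite (skQ (M l) (M l.+1)) (skQ vu (M l)) (skQ (M l.+1) vu) exch_mut_seq.
by rewrite /orient /pospart; case: ltrP; nia.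
Qed.

Lemma frozen_weight_grow : 2 <= `|B v1 v2| -> forall l, 0 < frozen_weight l.+1 ->
  2 * frozen_weight l.+1 - frozen_weight l <= frozen_weight l.+2.
Proof.
move=> B12 l; rewrite -norm_exch in B12.
by rewrite frozen_weight_rec /pospart; nia.
Qed.

Lemma frozen_weight_flip l :
  frozen_weight l.+1 <= 0 -> frozen_weight l.+2 = - frozen_weight l.
Proof. by rewrite frozen_weight_rec /pospart; nia. Qed.

Lemma frozen_weight_nz0 : connected3 B ->
  frozen_weight 0 != 0 \/ frozen_weight 1 != 0.
Proof.
move=> [_ B_conn]; have orient_nz : orient != 0 by rewrite /orient; case: ifP.
rewrite frozen_weightS /frozen_weight /= B_quiver !mulf_eq0 (negbTE orient_nz) oppr_eq0.
have := M_reduced.2 0%N.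
by case: (mutable_reduced 0) => ->; case: (mutable_reduced 1) => ->;
  rewrite ?eqxx //; case: B_conn; auto.
Qed.

Lemma both_pos_frozen_weight_cyclic l : B v1 v2 != 0 ->
  both_pos frozen_weight l -> ~~ acyclic (Q l).
Proof.
rewrite -normr_eq0 -norm_exch normr_eq0 => exch_nz.
have skQ := mut_seq_quiver_mx M l B_quiver.
have := skQ (M l) (M l.+1); have := skQ vu (M l); have := skQ (M l.+1) vu.
rewrite exch_mut_seq /both_pos frozen_weightS /frozen_weight /orient.
case: (ltrP 0 exch) => exch_sign sk1 sk2 sk3 /andP[pos1 pos2].
  by apply: (arrow_cycle3_not_acyclic (i := M l) (j := M l.+1) (k := vu));
    rewrite /arrow ?exch_mut_seq; lia.
by apply: (arrow_cycle3_not_acyclic (i := M l.+1) (j := M l) (k := vu));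
  rewrite /arrow; lia.
Qed.

End RankTwoMutation.

Theorem mainTheorem18 (B : 'M[int]_3) (M : nat -> 'I_3) :
  quiver_mx B -> connected3 B -> 2 <= `|B v1 v2| ->
  reduced_inf_seq M ->
  forall s : seq nat, uniq s -> all (fun l => acyclic (mut_seq B M l)) s ->
  (size s <= 4)%N.
Proof.
move=> B_quiver B_conn B12 M_red s uniq_s acyclic_s.
have W_grow := frozen_weight_grow B_quiver M_red B12.
have W_flip := frozen_weight_flip B_quiver M_red.
have W_nz0 := frozen_weight_nz0 B_quiver M_red B_conn.
apply: (not_both_pos_size W_grow W_flip W_nz0 uniq_s) => l l_s.
apply: contraTN (allP acyclic_s l l_s).
exact: both_pos_frozen_weight_cyclic B_conn.1.
Qed.
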